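(* Let $\Sigma=\{a,b\}$ and consider regular expressions over $\Sigma$ generated by $\beta := \varepsilon \mid a \mid b \mid (\beta+\beta) \mid (\beta\cdot\beta) \mid (\beta^\star)$. Let $\mathcal G_2$ be the grammar with start symbol $\alpha$ and productions \begin{align*} \alpha &:= \varepsilon \mid a \mid b \mid (\alpha\cdot\alpha) \mid (\alpha^\star) \mid (\alpha_P+\alpha_P),\\ \alpha_P &:= \varepsilon \mid a \mid b \mid (\alpha\cdot\alpha) \mid (\alpha_\Sigma^\star) \mid (\alpha_P+\alpha_P),\\ \alpha_\Sigma &:= \varepsilon \mid a \mid b \mid (\alpha\cdot\alpha) \mid (\alpha^\star) \mid \gamma,\\ \gamma &:= (\alpha_{ab}+\alpha_{ab}) \mid (\alpha_{ab}+a) \mid (\alpha_{ab}+b) \mid (a+\alpha_{ab}) \mid (b+\alpha_{ab}) \mid (a+a) \mid (b+b),\\ \alpha_{ab} &:= \varepsilon \mid (\alpha\cdot\alpha) \mid (\alpha_\Sigma^\star) \mid (\alpha_P+\alpha_P). \end{align*} Then a regular expression $\beta$ over $\{a,b\}$ is generated by $\mathcal G_2$ (from the start symbol $\alpha$) if and only if the pattern $(a+b)^\star$ or $(b+a)^\star$ does not occur in a union in $\beta$, i.e., $\beta$ has no subexpression of the form $(\beta_1+\beta_2)$ with $\beta_1$ or $\beta_2$ equal (syntactically) to $((a+b)^\star)$ or $((b+a)^\star)$.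
   Context: Regular expressions are treated as syntactic trees (fully parenthesized expressions); equality of expressions here means syntactic identity. *)

Inductive re : Type :=
| Eps : re
| ChA : re
| ChB : re
| Plus : re -> re -> re
| Cat : re -> re -> re
| Star : re -> re.

(** The grammar G_2: one inductive predicate per nonterminal.
    gen_alpha = alpha, gen_P = alpha_P, gen_S = alpha_Sigma,
    gen_gamma = gamma, gen_ab = alpha_ab. *)
Inductive gen_alpha : re -> Prop :=
| ga_eps : gen_alpha Eps
| ga_a : gen_alpha ChA
| ga_b : gen_alpha ChB
| ga_cat : forall r s, gen_alpha r -> gen_alpha s -> gen_alpha (Cat r s)
| ga_star : forall r, gen_alpha r -> gen_alpha (Star r)
| ga_plus : forall r s, gen_P r -> gen_P s -> gen_alpha (Plus r s)
with gen_P : re -> Prop :=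
| gP_eps : gen_P Eps
| gP_a : gen_P ChA
| gP_b : gen_P ChB
| gP_cat : forall r s, gen_alpha r -> gen_alpha s -> gen_P (Cat r s)
| gP_star : forall r, gen_S r -> gen_P (Star r)
| gP_plus : forall r s, gen_P r -> gen_P s -> gen_P (Plus r s)
with gen_S : re -> Prop :=
| gS_eps : gen_S Eps
| gS_a : gen_S ChA
| gS_b : gen_S ChB
| gS_cat : forall r s, gen_alpha r -> gen_alpha s -> gen_S (Cat r s)
| gS_star : forall r, gen_alpha r -> gen_S (Star r)
| gS_gamma : forall r, gen_gamma r -> gen_S r
with gen_gamma : re -> Prop :=
| gg_abab : forall r s, gen_ab r -> gen_ab s -> gen_gamma (Plus r s)
| gg_aba : forall r, gen_ab r -> gen_gamma (Plus r ChA)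
| gg_abb : forall r, gen_ab r -> gen_gamma (Plus r ChB)
| gg_aab : forall r, gen_ab r -> gen_gamma (Plus ChA r)
| gg_bab : forall r, gen_ab r -> gen_gamma (Plus ChB r)
| gg_aa : gen_gamma (Plus ChA ChA)
| gg_bb : gen_gamma (Plus ChB ChB)
with gen_ab : re -> Prop :=
| gab_eps : gen_ab Eps
| gab_cat : forall r s, gen_alpha r -> gen_alpha s -> gen_ab (Cat r s)
| gab_star : forall r, gen_S r -> gen_ab (Star r)
| gab_plus : forall r s, gen_P r -> gen_P s -> gen_ab (Plus r s).

Inductive subexpr (s : re) : re -> Prop :=
| sub_refl : subexpr s s
| sub_plusl : forall r1 r2, subexpr s r1 -> subexpr s (Plus r1 r2)
| sub_plusr : forall r1 r2, subexpr s r2 -> subexpr s (Plus r1 r2)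
| sub_catl : forall r1 r2, subexpr s r1 -> subexpr s (Cat r1 r2)
| sub_catr : forall r1 r2, subexpr s r2 -> subexpr s (Cat r1 r2)
| sub_star : forall r1, subexpr s r1 -> subexpr s (Star r1).

Definition forbidden (r : re) : Prop :=
  r = Star (Plus ChA ChB) \/ r = Star (Plus ChB ChA).

Definition occurs_in_union (beta : re) : Prop :=
  exists b1 b2, subexpr (Plus b1 b2) beta /\ (forbidden b1 \/ forbidden b2).


(* Each nonterminal of G_2 generates exactly the expressions with no forbidden
   summand in any union, subject to one side condition on the top-level shape:
   alpha_P excludes the forbidden patterns themselves, alpha_Sigma excludes the
   alphabet sums (a+b) and (b+a) (so that alpha_Sigma^* is never forbidden), and
   alpha_ab excludes the forbidden patterns and the letters; gamma lists the
   unions that are not alphabet sums. *)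

Definition is_letter (r : re) : bool :=
  match r with ChA | ChB => true | _ => false end.

Definition is_alphabet_sum (r : re) : bool :=
  match r with Plus ChA ChB | Plus ChB ChA => true | _ => false end.

Definition is_forbidden (r : re) : bool :=
  match r with Star s => is_alphabet_sum s | _ => false end.

Fixpoint no_forbidden_summand (r : re) : Prop :=
  match r with
  | Plus x y => no_forbidden_summand x /\ no_forbidden_summand y /\
                is_forbidden x = false /\ is_forbidden y = false
  | Cat x y => no_forbidden_summand x /\ no_forbidden_summand y
  | Star x => no_forbidden_summand x
  | _ => True
  end.

Lemma is_forbidden_spec r : is_forbidden r = true <-> forbidden r.
Proof.
  unfold forbidden; split.
  - destruct r as [| | | | |[| | |[] []| |]]; try discriminate; auto.
  - intros [-> | ->]; reflexivity.
Qed.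

Lemma subexpr_trans r s t : subexpr r s -> subexpr s t -> subexpr r t.
Proof. intros Hrs Hst; induction Hst; [exact Hrs | constructor; assumption ..]. Qed.

Lemma not_occurs_in_union_subexpr r s :
  subexpr r s -> ~ occurs_in_union s -> ~ occurs_in_union r.
Proof.
  intros Hrs Hs (b1 & b2 & Hsub & Hf); apply Hs.
  exists b1, b2; split; [exact (subexpr_trans _ _ _ Hsub Hrs) | exact Hf].
Qed.

Lemma occurs_in_union_plus r1 r2 :
  is_forbidden r1 = true \/ is_forbidden r2 = true -> occurs_in_union (Plus r1 r2).
Proof.
  intros Hf; exists r1, r2; split; [constructor |].
  destruct Hf; [left | right]; apply is_forbidden_spec; assumption.
Qed.

Lemma no_forbidden_summand_not_occurs r :
  no_forbidden_summand r -> ~ occurs_in_union r.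
Proof.
  intros Hr (b1 & b2 & Hsub & Hf).
  induction Hsub; simpl in Hr; try (apply IHHsub; tauto).
  destruct Hr as (_ & _ & Hf1 & Hf2).
  destruct Hf as [Hf | Hf]; apply is_forbidden_spec in Hf; congruence.
Qed.

Lemma not_occurs_no_forbidden_summand r :
  ~ occurs_in_union r -> no_forbidden_summand r.
Proof.
  induction r as [| | |r1 IH1 r2 IH2|r1 IH1 r2 IH2|r1 IH1]; intro Hocc; simpl; auto.
  - repeat split.
    + apply IH1, (not_occurs_in_union_subexpr _ (Plus r1 r2)); auto using subexpr.
    + apply IH2, (not_occurs_in_union_subexpr _ (Plus r1 r2)); auto using subexpr.
    + destruct (is_forbidden r1) eqn:E; auto.
      exfalso; apply Hocc, occurs_in_union_plus; auto.
    + destruct (is_forbidden r2) eqn:E; auto.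
      exfalso; apply Hocc, occurs_in_union_plus; auto.
  - split.
    + apply IH1, (not_occurs_in_union_subexpr _ (Cat r1 r2)); auto using subexpr.
    + apply IH2, (not_occurs_in_union_subexpr _ (Cat r1 r2)); auto using subexpr.
  - apply IH1, (not_occurs_in_union_subexpr _ (Star r1)); auto using subexpr.
Qed.

Scheme gen_alpha_mut := Induction for gen_alpha Sort Prop
  with gen_P_mut := Induction for gen_P Sort Prop
  with gen_S_mut := Induction for gen_S Sort Prop
  with gen_gamma_mut := Induction for gen_gamma Sort Prop
  with gen_ab_mut := Induction for gen_ab Sort Prop.
Combined Scheme gen_mutind
  from gen_alpha_mut, gen_P_mut, gen_S_mut, gen_gamma_mut, gen_ab_mut.

Lemma gen_sound :
  (forall r, gen_alpha r -> no_forbidden_summand r) /\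
  (forall r, gen_P r -> no_forbidden_summand r /\ is_forbidden r = false) /\
  (forall r, gen_S r -> no_forbidden_summand r /\ is_alphabet_sum r = false) /\
  (forall r, gen_gamma r -> no_forbidden_summand r /\ is_alphabet_sum r = false) /\
  (forall r, gen_ab r ->
     no_forbidden_summand r /\ is_forbidden r = false /\ is_letter r = false).
Proof.
  apply gen_mutind; intros; simpl in *; intuition;
    destruct r; simpl in *; congruence.
Qed.

Lemma gen_gamma_plus r1 r2 :
  gen_ab r1 \/ is_letter r1 = true -> gen_ab r2 \/ is_letter r2 = true ->
  is_alphabet_sum (Plus r1 r2) = false -> gen_gamma (Plus r1 r2).
Proof.
  intros [H1 | L1] [H2 | L2] Hsum; [| destruct r2 | destruct r1 | destruct r1, r2];
    try discriminate; constructor; assumption.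
Qed.

Lemma gen_complete r :
  no_forbidden_summand r ->
  gen_alpha r /\
  (is_forbidden r = false -> gen_P r) /\
  (is_alphabet_sum r = false -> gen_S r) /\
  (is_forbidden r = false -> gen_ab r \/ is_letter r = true).
Proof.
  induction r as [| | |r1 IH1 r2 IH2|r1 IH1 r2 IH2|r1 IH1]; simpl.
  1-3: repeat split; intros; auto using gen_alpha, gen_P, gen_S, gen_ab.
  - intros (N1 & N2 & F1 & F2).
    destruct (IH1 N1) as (_ & P1 & _ & AB1), (IH2 N2) as (_ & P2 & _ & AB2).
    repeat split; intros.
    + constructor; auto.
    + constructor; auto.
    + apply gS_gamma, gen_gamma_plus; auto.
    + left; constructor; auto.
  - intros (N1 & N2).
    destruct (IH1 N1) as (A1 & _), (IH2 N2) as (A2 & _).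
    repeat split; intros; [constructor; auto ..| left; constructor; auto].
  - intros N1; destruct (IH1 N1) as (A1 & _ & S1 & _).
    repeat split; intros; [constructor; auto ..| left; constructor; auto].
Qed.

Theorem lemma1 : forall beta : re, gen_alpha beta <-> ~ occurs_in_union beta.
Proof.
  intro beta; split; intro H.
  - apply no_forbidden_summand_not_occurs, (proj1 gen_sound), H.
  - apply gen_complete, not_occurs_no_forbidden_summand, H.
Qed.
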